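(* Let $c=(c_1,\dots,c_p)$ with $c_1\ge\cdots\ge c_p>0$ and $C=\operatorname{diag}(c_1,\dots,c_p)$. If $R\in M_p$ satisfies $\|R\|_c=\operatorname{tr}(CR)$, where $\|R\|_c=\sum_{j=1}^p c_js_j(R)$, then $R$ is positive semidefinite.
   Context: $M_p$ is the set of $p\times p$ complex matrices and $s_1(R)\ge\cdots\ge s_p(R)$ are the singular values of $R$. *)

From mathcomp Require Import all_boot all_order all_algebra.
From mathcomp Require Import reals.
From mathcomp.real_closed Require Import complex.
Set Implicit Arguments. Unset Strict Implicit. Unset Printing Implicit Defensive.
Import Order.TTheory GRing.Theory Num.Theory.
Local Open Scope ring_scope.

Definition adjmx (R : realType) m n (A : 'M[R[i]]_(m, n)) : 'M[R[i]]_(n, m) :=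
  map_mx Num.conj (A^T).

Definition singular_values (R : realType) (p : nat) (A : 'M[R[i]]_p)
    (s : 'I_p -> R) : Prop :=
  [/\ forall j, 0 <= s j,
      forall j k : 'I_p, (j <= k)%N -> s k <= s j &
      char_poly (adjmx A *m A) = \prod_(j < p) ('X - (real_complex R (s j ^+ 2))%:P)].

Definition cnorm (R : realType) (p : nat) (c s : 'I_p -> R) : R :=
  \sum_(j < p) c j * s j.

Definition psd (R : realType) (p : nat) (A : 'M[R[i]]_p) : Prop :=
  adjmx A = A /\ forall x : 'cV[R[i]]_p, 0 <= (adjmx x *m A *m x) ord0 ord0.

(* For every [A], [Re tr(CA) <= ||A||_c] (von Neumann's trace
   inequality): write [A = B W] with [W] unitary and the columns of [B]
   orthogonal of norms [s_j]; AM-GM bounds [Re tr(CA)] by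
   [sum_ij c_i s_j d_ij] for a doubly substochastic [d], and a rearrangement
   (Abel summation) argument bounds this by [sum_i c_i s_i].
   As [||.||_c] is unitarily invariant, the equality [tr(CA) = ||A||_c] says
   that both [CA] and [AC] maximise [X |-> Re tr(U X)] over unitary [U]. Such
   an [X] has a real nonnegative diagonal in every orthonormal basis, hence is
   positive semidefinite. Finally, [CA] and [AC] Hermitian force [A] to commute
   with [C], and then [A = C^(-1/2) (CA) C^(-1/2)] is positive semidefinite. *)

From mathcomp Require Import all_boot all_order all_algebra perm.
From mathcomp Require Import reals.
From mathcomp.real_closed Require Import complex.
From mathcomp Require Import ring lra.
Set Implicit Arguments.
Unset Strict Implicit.
Unset Printing Implicit Defensive.

Import Order.TTheory GRing.Theory Num.Theory.
Local Open Scope ring_scope.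
Local Open Scope complex_scope.

Section Rearrangement.
Variable R : realDomainType.

Lemma abel_sum_ge0 n (c z : nat -> R) :
  (forall i j, (i <= j < n)%N -> c j <= c i) ->
  (forall i, (i < n)%N -> 0 <= c i) ->
  (forall k, (k < n)%N -> 0 <= \sum_(i < k.+1) z i) ->
  0 <= \sum_(i < n) c i * z i.
Proof.
elim: n c => [|n IHn] c c_dec c_ge0 z_ge0; first by rewrite big_ord0.
have -> : \sum_(i < n.+1) c i * z i =
    \sum_(i < n) (c i - c n) * z i + c n * \sum_(i < n.+1) z i.
  rewrite big_ord_recr /= mulr_sumr big_ord_recr /= addrA; congr (_ + _).
  by rewrite -big_split /=; apply: eq_bigr => i _; ring.
apply: addr_ge0; last exact: mulr_ge0 (c_ge0 _ _) (z_ge0 _ _).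
apply: (IHn (fun i => c i - c n)) => [i j /andP[le_ij lt_jn]|i lt_in|k lt_kn].
- by rewrite lerD2r c_dec // le_ij ltnW.
- by rewrite subr_ge0 c_dec // ltnW // leqnn.
- by apply: z_ge0; rewrite ltnW.
Qed.

Variable p : nat.
Implicit Types (c s x y e : 'I_p -> R).

Let ext (f : 'I_p -> R) (n : nat) : R := oapp f 0 (insub n).

Let ext_ord f n (lt_np : (n < p)%N) : ext f n = f (Ordinal lt_np).
Proof. by rewrite /ext -[n]/(val (Ordinal lt_np)) valK. Qed.

Let sum_ext f : \sum_(i < p) ext f i = \sum_i f i.
Proof. by apply: eq_bigr => i _; rewrite /ext valK. Qed.

Let prefix_sum_ext f (k : 'I_p) :
  \sum_(i < k.+1) ext f i = \sum_(i : 'I_p | (i <= k)%N) f i.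
Proof.
rewrite (big_ord_widen p (ext f) (ltn_ord k)).
by apply: eq_big => [i|i _]; rewrite ?ltnS // /ext valK.
Qed.

Lemma sum_nonincreasing_mul_le c x y :
  (forall j k : 'I_p, (j <= k)%N -> c k <= c j) -> (forall j, 0 <= c j) ->
  (forall k : 'I_p,
     \sum_(i : 'I_p | (i <= k)%N) y i <= \sum_(i : 'I_p | (i <= k)%N) x i) ->
  \sum_i c i * y i <= \sum_i c i * x i.
Proof.
move=> c_dec c_ge0 xy_prefix; rewrite -subr_ge0 -sumrB.
under eq_bigr do rewrite -mulrBr.
rewrite -(sum_ext (fun i => c i * (x i - y i))).
have -> : \sum_(i < p) ext (fun i => c i * (x i - y i)) i =
          \sum_(i < p) ext c i * ext (x \- y) i.
  by apply: eq_bigr => i _; rewrite /ext valK.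
apply: abel_sum_ge0 => [i j /andP[le_ij lt_jp]|i lt_ip|k lt_kp].
- by rewrite (ext_ord _ lt_jp) (ext_ord _ (leq_ltn_trans le_ij lt_jp)) c_dec.
- by rewrite (ext_ord _ lt_ip) c_ge0.
- rewrite (prefix_sum_ext _ (Ordinal lt_kp)) /= sumrB subr_ge0.
  exact: xy_prefix (Ordinal lt_kp).
Qed.

Lemma sum_mul_weights_le_prefix s e (k : 'I_p) :
  (forall j l : 'I_p, (j <= l)%N -> s l <= s j) -> (forall j, 0 <= s j) ->
  (forall j, 0 <= e j <= 1) -> \sum_j e j <= \sum_(j : 'I_p | (j <= k)%N) 1 ->
  \sum_j s j * e j <= \sum_(j : 'I_p | (j <= k)%N) s j.
Proof.
move=> s_dec s_ge0 e01 sum_e.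
rewrite -subr_le0 [X in _ - X]big_mkcond -sumrB /=.
apply: (@le_trans _ _ (\sum_j s k * (e j - if (j <= k)%N then 1 else 0))).
  apply: ler_sum => j _; have /andP[e0 e1] := e01 j.
  case: (leqP j k) => [le_jk|lt_kj].
  - by have := s_dec _ _ le_jk; nra.
  - by have := s_dec _ _ (ltnW lt_kj); rewrite !subr0; nra.
rewrite -mulr_sumr sumrB -big_mkcond /=.
by rewrite mulr_ge0_le0 // subr_le0.
Qed.

Lemma doubly_substochastic_sum_le c s (d : 'I_p -> 'I_p -> R) :
  (forall j k : 'I_p, (j <= k)%N -> c k <= c j) -> (forall j, 0 <= c j) ->
  (forall j k : 'I_p, (j <= k)%N -> s k <= s j) -> (forall j, 0 <= s j) ->
  (forall i j, 0 <= d i j) ->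
  (forall i, \sum_j d i j <= 1) -> (forall j, \sum_i d i j <= 1) ->
  \sum_i \sum_j c i * s j * d i j <= \sum_i c i * s i.
Proof.
move=> c_dec c_ge0 s_dec s_ge0 d_ge0 row_le1 col_le1.
under eq_bigr do under eq_bigr do rewrite -mulrA; under eq_bigr do rewrite -mulr_sumr.
apply: sum_nonincreasing_mul_le => // k.
pose e j := \sum_(i : 'I_p | (i <= k)%N) d i j.
have -> : \sum_(i : 'I_p | (i <= k)%N) \sum_j s j * d i j = \sum_j s j * e j.
  by rewrite exchange_big; apply: eq_bigr => j _; rewrite mulr_sumr.
apply: sum_mul_weights_le_prefix => // [j|].
  rewrite sumr_ge0 //= (le_trans _ (col_le1 j)) // [leLHS]big_mkcond.
  by apply: ler_sum => i _; case: ifP.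
by rewrite /e exchange_big; apply: ler_sum => i _.
Qed.

End Rearrangement.

Section ComplexFacts.
Variable R : rcfType.
Local Notation C := R[i].
Local Notation Re := (@complex.Re R).
Local Notation Im := (@complex.Im R).
Implicit Types (z w : C) (x : R).

Definition sqnorm z : R := Re z ^+ 2 + Im z ^+ 2.

Lemma ReM z w : Re (z * w) = Re z * Re w - Im z * Im w.
Proof. by case: z w => [a b] [c d]. Qed.

Lemma ImM z w : Im (z * w) = Re z * Im w + Im z * Re w.
Proof. by case: z w => [a b] [c d]. Qed.

Lemma Re_sum I (r : seq I) (P : pred I) (F : I -> C) :
  Re (\sum_(i <- r | P i) F i) = \sum_(i <- r | P i) Re (F i).
Proof. exact: raddf_sum. Qed.

Lemma Re_conj z : Re (Num.conj z) = Re z. Proof. by case: z. Qed.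
Lemma Im_conj z : Im (Num.conj z) = - Im z. Proof. by case: z. Qed.

Lemma Re_realM x z : Re (x%:C * z) = x * Re z.
Proof. by rewrite ReM /=; ring. Qed.

Lemma Re_mul_conj z : Re (z * Num.conj z) = sqnorm z.
Proof. by rewrite ReM Re_conj Im_conj /sqnorm; ring. Qed.

Lemma Re_conj_mul z : Re (Num.conj z * z) = sqnorm z.
Proof. by rewrite mulrC Re_mul_conj. Qed.

Lemma sqnorm_ge0 z : 0 <= sqnorm z.
Proof. by rewrite addr_ge0 ?sqr_ge0. Qed.

Lemma sqnorm_eq0 z : (sqnorm z == 0) = (z == 0).
Proof.
case: z => a b; rewrite /sqnorm paddr_eq0 ?sqr_ge0 // !sqrf_eq0.
by rewrite eq_complex.
Qed.

Lemma sqnorm_mulr z x : sqnorm (z * x%:C) = sqnorm z * x ^+ 2.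
Proof. by rewrite /sqnorm ReM ImM /=; ring. Qed.

Lemma conj_real x : Num.conj (x%:C : C) = x%:C.
Proof. by apply/eqP; rewrite eq_complex Re_conj Im_conj /= oppr0 !eqxx. Qed.

Lemma ge0_of_Re_norm_le z : Re `|z| <= Re z -> 0 <= z.
Proof.
case: z => a b; rewrite normc_def lecE /= => le_ra.
have r_ge0 := sqrtr_ge0 (a ^+ 2 + b ^+ 2).
have r2 := sqr_sqrtr (addr_ge0 (sqr_ge0 a) (sqr_ge0 b)).
have b0 : b = 0 by apply/eqP; rewrite -sqrf_eq0 eq_le sqr_ge0 andbT; nra.
by rewrite b0 eqxx /=; lra.
Qed.

(* Since [b / 0 = 0], the case [t = 0] needs [b = 0]. *)
Lemma Re_mul_le_amgm t w b : 0 <= t -> (t = 0 -> b = 0) ->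
  Re (w * b) <= t * ((sqnorm w + sqnorm b / t ^+ 2) / 2).
Proof.
move=> t_ge0 tb0; have [t0|t_neq0] := eqVneq t 0.
  by rewrite t0 tb0 // mulr0 mul0r /=.
have t_gt0 : 0 < t by rewrite lt_def t_neq0.
have -> : t * ((sqnorm w + sqnorm b / t ^+ 2) / 2) =
          (t ^+ 2 * sqnorm w + sqnorm b) / (2 * t) by field.
rewrite ler_pdivlMr ?mulr_gt0 // ReM /sqnorm.
have := sqr_ge0 (t * Re w - Re b); have := sqr_ge0 (t * Im w + Im b); nra.
Qed.

End ComplexFacts.

Lemma char_poly_similar (F : comUnitRingType) n (P B : 'M[F]_n) : P \in unitmx ->
  char_poly (invmx P *m B *m P) = char_poly B.
Proof.
move=> P_unit; rewrite /char_poly /char_poly_mx.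
have -> : 'X%:M - map_mx polyC (invmx P *m B *m P) =
    map_mx polyC (invmx P) *m ('X%:M - map_mx polyC B) *m map_mx polyC P.
  rewrite mulmxBr mulmxBl -!map_mxM; congr (_ - _).
  by rewrite -mulmxA -scalar_mxC mulmxA -map_mxM mulVmx // map_mx1 mul1mx.
by rewrite !det_mulmx mulrAC -det_mulmx -map_mxM mulVmx // map_mx1 det1 mul1r.
Qed.

Lemma prod_XsubC_perm (F : fieldType) n (a b : 'I_n -> F) :
  \prod_j ('X - (a j)%:P) = \prod_j ('X - (b j)%:P) ->
  exists s : 'S_n, forall j, a j = b (s j).
Proof.
move=> eq_prod.
have /tuple_permP[s eq_ab] : perm_eq [tuple a j | j < n] [tuple b j | j < n].
  by apply: prod_XsubC_eq; rewrite !big_tuple; under eq_bigr do rewrite tnth_mktuple;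
     under [RHS]eq_bigr do rewrite tnth_mktuple.
exists s => j; have := congr1 (fun t => tnth t j) (val_inj eq_ab).
by rewrite !tnth_mktuple.
Qed.

Section Gram.
Local Open Scope sesquilinear_scope.
Variable R : rcfType.
Local Notation C := R[i].
Local Notation Re := (@complex.Re R).

Lemma adjmx_mul m n k (A : 'M[C]_(m, n)) (B : 'M[C]_(n, k)) :
  (A *m B)^t* = B^t* *m A^t*.
Proof. by rewrite trmx_mul map_mxM. Qed.

Lemma adjmx_entry m n (A : 'M[C]_(m, n)) i j : A^t* i j = (A j i)^*.
Proof. by rewrite !mxE. Qed.

Lemma adjmx_diag_real n (d : 'I_n -> R) :
  (diag_mx (\row_j (d j)%:C))^t* = diag_mx (\row_j (d j)%:C) :> 'M[C]_n.
Proof.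
rewrite tr_diag_mx map_diag_mx; congr diag_mx.
by apply/rowP => j; rewrite !mxE; exact: conj_real.
Qed.

Lemma unitarymx_mulV n (W : 'M[C]_n) : W \is unitarymx -> W^t* *m W = 1%:M.
Proof. by move=> W_unitary; rewrite -[W^t*]mul1mx mulmxKtV. Qed.

Lemma Re_adj_mulmx_diag m n (B : 'M[C]_(m, n)) j :
  Re ((B^t* *m B) j j) = \sum_i sqnorm (B i j).
Proof.
rewrite mxE Re_sum; apply: eq_bigr => i _.
by rewrite !mxE Re_conj_mul.
Qed.

Lemma Re_mulmx_adj_diag m n (B : 'M[C]_(m, n)) i :
  Re ((B *m B^t*) i i) = \sum_j sqnorm (B i j).
Proof.
rewrite mxE Re_sum; apply: eq_bigr => j _.
by rewrite !mxE Re_mul_conj.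
Qed.

Lemma unitary_row_sqnorm m n (W : 'M[C]_(m, n)) i :
  W \is unitarymx -> \sum_j sqnorm (W i j) = 1.
Proof. by move/unitarymxP=> WWt; rewrite -Re_mulmx_adj_diag WWt mxE eqxx. Qed.

Lemma unitary_col_sqnorm n (W : 'M[C]_n) j :
  W \is unitarymx -> \sum_i sqnorm (W i j) = 1.
Proof. by move/unitarymx_mulV=> WtW; rewrite -Re_adj_mulmx_diag WtW mxE eqxx. Qed.

Lemma partial_isometry_row_sqnorm_le1 m n (E : 'M[C]_(m, n)) i :
  E *m E^t* *m E = E -> \sum_j sqnorm (E i j) <= 1.
Proof.
(* [E E^*] is an orthogonal projection, so its diagonal entries lie in [[0, 1]]. *)
move=> EEtE; set P := E *m E^t*.
have P_adj : P^t* = P by rewrite adjmx_mul trmxCK.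
have PP : P *m P^t* = P by rewrite P_adj /P mulmxA EEtE.
have Pii_ge : Re (P i i) ^+ 2 <= Re (P i i).
  rewrite -{2}PP (Re_mulmx_adj_diag P) (bigD1 i) //=.
  apply: (@le_trans _ _ (sqnorm (P i i))); first by rewrite lerDl sqr_ge0.
  by rewrite lerDl sumr_ge0 // => j _; apply: sqnorm_ge0.
rewrite -Re_mulmx_adj_diag -/P; have : 0 <= Re (P i i).
  by rewrite Re_mulmx_adj_diag sumr_ge0 // => j _; apply: sqnorm_ge0.
nra.
Qed.

Section OrthogonalColumns.
Variables (m n : nat) (B : 'M[C]_(m, n)) (t : 'I_n -> R).
Hypothesis BtB : B^t* *m B = diag_mx (\row_j (t j ^+ 2)%:C).

Lemma gram_diag_col_sqnorm j : \sum_i sqnorm (B i j) = t j ^+ 2.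
Proof. by rewrite -Re_adj_mulmx_diag BtB !mxE eqxx mulr1n. Qed.

Lemma gram_diag_col_eq0 i j : t j = 0 -> B i j = 0.
Proof.
move=> tj0; apply/eqP; rewrite -sqnorm_eq0 eq_le sqnorm_ge0 andbT.
apply: (@le_trans _ _ (\sum_k sqnorm (B k j))).
  by rewrite (bigD1 i) //= lerDl sumr_ge0 // => k _; apply: sqnorm_ge0.
by rewrite gram_diag_col_sqnorm tj0 expr0n.
Qed.

Lemma gram_diag_row_sqnorm_le1 i : \sum_j sqnorm (B i j) / t j ^+ 2 <= 1.
Proof.
pose D := diag_mx (\row_j ((t j)^-1)%:C : 'rV[C]_n); pose E := B *m D.
have D_adj : D^t* = D := adjmx_diag_real _.
have E_entry a b : E a b = B a b * ((t b)^-1)%:C by rewrite /E mul_mx_diag !mxE.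
have EtE : E^t* *m E = diag_mx (\row_j ((t j)^-1 * (t j ^+ 2 * (t j)^-1))%:C).
  rewrite /E adjmx_mul D_adj -mulmxA (mulmxA (B^t*)) BtB !mulmx_diag.
  by congr diag_mx; apply/rowP => j; rewrite !mxE -!rmorphM.
have EEtE : E *m E^t* *m E = E.
  rewrite -mulmxA EtE mul_mx_diag; apply/matrixP => a b; rewrite mxE [X in _ * X]mxE.
  have [tb0|tb_neq0] := eqVneq (t b) 0.
    by rewrite E_entry (gram_diag_col_eq0 a tb0) !mul0r.
  have -> : (t b)^-1 * (t b ^+ 2 * (t b)^-1) = 1 by field.
  by rewrite rmorph1 mulr1.
have := partial_isometry_row_sqnorm_le1 i EEtE.
by under eq_bigr do rewrite E_entry sqnorm_mulr exprVn.
Qed.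

End OrthogonalColumns.

End Gram.

Section TraceBound.
Local Open Scope sesquilinear_scope.
Variable R : realType.
Local Notation C := R[i].
Local Notation Re := (@complex.Re R).

Lemma singular_values_diag_gram p (A : 'M[C]_p) s : singular_values A s ->
  exists2 W : 'M[C]_p, W \is unitarymx &
    (A *m W^t*)^t* *m (A *m W^t*) = diag_mx (\row_j (s j ^+ 2)%:C).
Proof.
case=> _ _ charA; set H := A^t* *m A.
have H_normal : H \is normalmx by apply/normalmxP; rewrite adjmx_mul trmxCK.
set V := spectralmx H; set l := spectral_diag H.
have V_unitary : V \is unitarymx := spectral_unitarymx H.
have HE : H = V^t* *m diag_mx l *m V.
  by rewrite -invmx_unitary //; apply/orthomx_spectralP.
have charH : char_poly H = \prod_j ('X - (l 0 j)%:P).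
  rewrite HE -invmx_unitary // char_poly_similar ?unitarymx_unit //.
  rewrite char_poly_trig ?diag_mx_is_trig //.
  by apply: eq_bigr => j _; rewrite mxE eqxx mulr1n.
have [σ sl] : exists σ : 'S_p, forall j, (s j ^+ 2)%:C = l 0 (σ j).
  by apply: prod_XsubC_perm; rewrite -charA.
have P_adj : (perm_mx σ : 'M[C]_p)^t* = perm_mx σ^-1.
  by rewrite tr_perm_mx map_perm_mx.
(* [perm_mx σ] lists the eigenvalues of [A^* A] in the order of [s]. *)
exists (perm_mx σ *m V).
  apply: mul_unitarymx => //; apply/unitarymxP.
  by rewrite P_adj -perm_mxM mulgV perm_mx1.
have -> : (A *m (perm_mx σ *m V)^t*)^t* *m (A *m (perm_mx σ *m V)^t*) =
          perm_mx σ *m diag_mx l *m perm_mx σ^-1.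
  rewrite !adjmx_mul !trmxCK P_adj !mulmxA -(mulmxA _ (A^t*)) -/H HE.
  by rewrite !mulmxA !mulmxtVK.
rewrite -(col_permE σ) -row_permE; apply/matrixP => i j.
by rewrite !mxE (inj_eq perm_inj) sl.
Qed.

Lemma Re_trace_diag_mul_le_cnorm p (c s : 'I_p -> R) (A : 'M[C]_p) :
  (forall j k : 'I_p, (j <= k)%N -> c k <= c j) -> (forall j, 0 <= c j) ->
  singular_values A s ->
  Re (\tr (diag_mx (\row_j (c j)%:C) *m A)) <= cnorm c s.
Proof.
move=> c_dec c_ge0 sA; have [s_ge0 s_dec _] := sA.
have [W W_unitary] := singular_values_diag_gram sA; set B := A *m W^t* => BtB.
have AE : A = B *m W by rewrite /B mulmxKtV.
(* [d] is doubly substochastic: [W] is unitary and the columns of [B] have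
   norms [s j]. *)
pose d i j := (sqnorm (W j i) + sqnorm (B i j) / s j ^+ 2) / 2.
have -> : \tr (diag_mx (\row_j (c j)%:C) *m A) =
          \sum_j \sum_i W j i * ((c i)%:C * B i j).
  rewrite AE mulmxA mxtrace_mulC; apply: eq_bigr => j _; rewrite mxE.
  by apply: eq_bigr => i _; rewrite mul_diag_mx !mxE.
apply: (@le_trans _ _ (\sum_i \sum_j c i * s j * d i j)).
  rewrite Re_sum; under eq_bigr do rewrite Re_sum; rewrite exchange_big /=.
  apply: ler_sum => i _; apply: ler_sum => j _.
  rewrite mulrCA Re_realM -mulrA ler_wpM2l //.
  by rewrite /d; apply: Re_mul_le_amgm => //; apply: gram_diag_col_eq0 BtB i j.
apply: doubly_substochastic_sum_le => // [i j|i|j].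
- rewrite /d; do ![apply: divr_ge0 | apply: addr_ge0 | exact: sqnorm_ge0
                   | exact: sqr_ge0 | done].
- rewrite -mulr_suml big_split /= ler_pdivrMr // mul1r.
  by apply: lerD; [rewrite unitary_col_sqnorm | exact: gram_diag_row_sqnorm_le1 BtB i].
- rewrite -mulr_suml big_split /= ler_pdivrMr // mul1r -mulr_suml.
  rewrite unitary_row_sqnorm // (gram_diag_col_sqnorm BtB).
  have [sj0|sj_neq0] := eqVneq (s j) 0; first by rewrite sj0 expr0n /= mul0r; lra.
  by rewrite divff ?expf_neq0.
Qed.

End TraceBound.

Section Maximality.
Local Open Scope sesquilinear_scope.
Variable R : realType.
Local Notation C := R[i].
Local Notation Re := (@complex.Re R).

Lemma spectralmx_conj_diag n (K : 'M[C]_n) : K \is normalmx ->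
  spectralmx K *m K *m (spectralmx K)^t* = diag_mx (spectral_diag K).
Proof.
move=> /orthomx_spectralP {2}->; have V_unitary := spectral_unitarymx K.
by rewrite invmx_unitary // !mulmxA (unitarymxP V_unitary) mul1mx mulmxtVK.
Qed.

Variables (p : nat) (M : 'M[C]_p).
Hypothesis M_max :
  forall U : 'M[C]_p, U \is unitarymx -> Re (\tr (U *m M)) <= Re (\tr M).

Lemma trace_max_conj_diag_ge0 (V : 'M[C]_p) (j : 'I_p) :
  V \is unitarymx -> 0 <= (V *m M *m V^t*) j j.
Proof.
move=> V_unitary; set N := V *m M *m V^t*; set z := N j j.
have [->|z_neq0] := eqVneq z 0; first by [].
have nz_neq0 : `|z| != 0 by rewrite normr_eq0.
(* Rotating the [j]-th coordinate by [w] turns [z] into [`|z|]; maximality then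
   gives [`|z| <= Re z]. *)
pose w := z^* / `|z|.
have wz : w * z = `|z| by rewrite /w mulrAC -normCKC expr2 mulfK.
have ww : w * w^* = 1.
  by rewrite -normCK /w normrM normfV norm_conjC normr_id divff // expr1n.
pose e := \row_k (if k == j then w else 1).
have U_unitary : V^t* *m diag_mx e *m V \is unitarymx.
  rewrite mul_unitarymx ?mul_unitarymx ?trmxC_unitary //.
  apply/unitarymxP; rewrite tr_diag_mx map_diag_mx mulmx_diag -diag_const_mx.
  congr diag_mx; apply/rowP => k; rewrite !mxE; case: eqP => _; first exact: ww.
  by rewrite rmorph1 mulr1.
have trN (f : 'rV[C]_p) : \tr (V^t* *m diag_mx f *m V *m M) = \sum_k f 0 k * N k k.
  rewrite -!mulmxA mxtrace_mulC -mulmxA; apply: eq_bigr => k _.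
  by rewrite mul_diag_mx mxE.
have trM : \tr M = \tr N.
  by rewrite /N mxtrace_mulC mulmxA (unitarymx_mulV V_unitary) mul1mx.
have off_diag : \sum_(k | k != j) Re (e 0 k * N k k) = \sum_(k | k != j) Re (N k k).
  by apply: eq_bigr => k /negbTE k_neq_j; rewrite mxE k_neq_j mul1r.
move: (M_max U_unitary); rewrite trN trM /mxtrace !Re_sum.
rewrite (bigD1 j) //= [leRHS](bigD1 j) //= off_diag mxE eqxx wz lerD2r.
exact: ge0_of_Re_norm_le.
Qed.

Lemma trace_max_hermitian : M^t* = M.
Proof.
set K := M - M^t*.
have K_adj : K^t* = - K by rewrite /K linearB map_mxB trmxCK opprB.
have K_normal : K \is normalmx by apply/normalmxP; rewrite K_adj mulmxN mulNmx.
set V := spectralmx K.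
have VKV : V *m K *m V^t* = V *m M *m V^t* - (V *m M *m V^t*)^t*.
  by rewrite /K mulmxBr mulmxBl !adjmx_mul trmxCK !mulmxA.
have k0 : spectral_diag K = 0.
  apply/rowP => j.
  have := congr1 (fun X : 'M[C]_p => X j j) (spectralmx_conj_diag K_normal).
  rewrite -/V VKV /= [RHS]mxE eqxx mulr1n => <-.
  have := trace_max_conj_diag_ge0 j (spectral_unitarymx K).
  by move: (V *m M *m V^t*) => N /geC0_conj N_real; rewrite !mxE N_real subrr.
have K0 : K = 0 by rewrite (orthomx_spectralP K_normal) k0 linear0 mulmx0 mul0mx.
exact/esym/subr0_eq.
Qed.

Lemma trace_max_psd : psd M.
Proof.
have M_herm := trace_max_hermitian; split=> // x.
have M_normal : M \is normalmx by apply/normalmxP; rewrite M_herm.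
set V := spectralmx M; set mu := spectral_diag M.
have V_unitary : V \is unitarymx := spectral_unitarymx M.
have mu_ge0 j : 0 <= mu 0 j.
  have := trace_max_conj_diag_ge0 j V_unitary.
  by rewrite spectralmx_conj_diag // mxE eqxx mulr1n.
rewrite /adjmx (orthomx_spectralP M_normal) -/V -/mu invmx_unitary //.
have -> : x^t* *m (V^t* *m diag_mx mu *m V) *m x =
          (V *m x)^t* *m diag_mx mu *m (V *m x).
  by rewrite adjmx_mul !mulmxA.
rewrite mxE; apply: sumr_ge0 => k _; rewrite mul_mx_diag !mxE mulrAC.
by rewrite mulr_ge0 // -normCKC exprn_ge0.
Qed.

End Maximality.

Section DiagonalScaling.
Local Open Scope sesquilinear_scope.
Variables (R : realType) (p : nat) (c : 'I_p -> R).
Local Notation C := R[i].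
Hypothesis c_gt0 : forall j, 0 < c j.
Let Cd : 'M[C]_p := diag_mx (\row_j (c j)%:C).

Let real_eq0 x : (x%:C == 0 :> C) = (x == 0).
Proof. by rewrite eq_complex /= eqxx andbT. Qed.

Lemma hermitian_diag_products_entry (A : 'M[C]_p) :
  (A *m Cd)^t* = A *m Cd -> (Cd *m A)^t* = Cd *m A -> forall i j,
  A i j = (A j i)^* /\ (c i = c j \/ A i j = 0).
Proof.
rewrite /Cd !adjmx_mul !adjmx_diag_real !mul_mx_diag !mul_diag_mx.
move=> + + i j; pose entry (X : 'M[C]_p) := X i j.
move=> /(congr1 entry) + /(congr1 entry).
rewrite /entry !(adjmx_entry, mxE).
set a := A i j; set b := (A j i)^* => AC CA.
have [cij|cij] := eqVneq (c i) (c j).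
  split; last by left.
  have ci_neq0 : (c i)%:C != 0 :> C by rewrite real_eq0 gt_eqF.
  by apply: (mulfI ci_neq0); rewrite -CA mulrC cij.
have a0 : a = 0.
  have : ((c i)%:C - (c j)%:C) * ((c i)%:C + (c j)%:C) * a = 0.
    rewrite (_ : _ * a = (c i)%:C * ((c i)%:C * a) - (c j)%:C * (a * (c j)%:C)).
      by rewrite -CA -AC; ring.
    by ring.
  rewrite -rmorphB -rmorphD -rmorphM => /eqP.
  rewrite mulf_eq0 real_eq0 mulf_eq0 subr_eq0 (negbTE cij) /= => /orP[|/eqP //].
  by rewrite gt_eqF // addr_gt0.
move/eqP: CA; rewrite a0 mulr0 mulf_eq0 real_eq0 (gt_eqF (c_gt0 j)) orbF => /eqP b0.
by rewrite b0; split => //; right.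
Qed.

Lemma psd_of_psd_diag_products (A : 'M[C]_p) : psd (A *m Cd) -> psd (Cd *m A) -> psd A.
Proof.
move=> [AC_herm AC_psd] [CA_herm _].
have entry := hermitian_diag_products_entry AC_herm CA_herm.
split=> [|x].
  by apply/matrixP => i j; rewrite /adjmx adjmx_entry -(entry i j).1.
pose D : 'M[C]_p := diag_mx (\row_j ((Num.sqrt (c j))^-1)%:C).
have sqrt_cancel j : (Num.sqrt (c j))^-1 * c j / Num.sqrt (c j) = 1.
  have := sqr_sqrtr (ltW (c_gt0 j)); have := sqrtr_gt0 (c j); rewrite c_gt0.
  set r := Num.sqrt (c j) => r_gt0 r2; rewrite -r2; field; exact: lt0r_neq0.
have AE : A = D *m (A *m Cd) *m D.
  apply/matrixP => i j; rewrite mul_mx_diag mul_diag_mx /Cd mul_mx_diag !mxE.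
  have [cij|->] := (entry i j).2; last by rewrite !(mulr0, mul0r).
  by rewrite mulrCA -mulrA -!rmorphM /= cij sqrt_cancel mulr1.
rewrite AE /adjmx.
have -> : x^t* *m (D *m (A *m Cd) *m D) *m x = (D *m x)^t* *m (A *m Cd) *m (D *m x).
  by rewrite adjmx_mul adjmx_diag_real !mulmxA.
exact: AC_psd.
Qed.

End DiagonalScaling.

Section UnitaryInvariance.
Local Open Scope sesquilinear_scope.
Variables (R : realType) (p : nat) (A U : 'M[R[i]]_p) (s : 'I_p -> R).
Hypothesis U_unitary : U \is unitarymx.

Lemma singular_values_mulUl : singular_values A s -> singular_values (U *m A) s.
Proof.
case=> s_ge0 s_dec charA; split=> //.
by rewrite /adjmx adjmx_mul -mulmxA (mulmxA (U^t*)) unitarymx_mulV // mul1mx.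
Qed.

Lemma singular_values_mulUr : singular_values A s -> singular_values (A *m U) s.
Proof.
case=> s_ge0 s_dec charA; split=> //.
rewrite /adjmx adjmx_mul -mulmxA (mulmxA (A^t*)) mulmxA -invmx_unitary //.
by rewrite char_poly_similar ?unitarymx_unit.
Qed.

End UnitaryInvariance.

Theorem lemma3p3 (R : realType) (p : nat) (c : 'I_p -> R)
    (hc_dec : forall j k : 'I_p, (j <= k)%N -> c k <= c j)
    (hc_pos : forall j : 'I_p, 0 < c j)
    (A : 'M[R[i]]_p) (s : 'I_p -> R)
    (hs : singular_values A s) :
    (real_complex R (cnorm c s) = \tr (diag_mx (\row_j real_complex R (c j)) *m A)) -> psd A.
Proof.
set Cd := diag_mx _ => tr_CA.
have c_ge0 j : 0 <= c j by apply: ltW.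
have Re_tr_CA : complex.Re (\tr (Cd *m A)) = cnorm c s by rewrite -tr_CA.
apply: (psd_of_psd_diag_products hc_pos); apply: trace_max_psd => U U_unitary.
- rewrite mulmxA mxtrace_mulC [\tr (A *m Cd)]mxtrace_mulC Re_tr_CA.
  exact/Re_trace_diag_mul_le_cnorm/singular_values_mulUl.
- rewrite mxtrace_mulC -mulmxA Re_tr_CA.
  exact/Re_trace_diag_mul_le_cnorm/singular_values_mulUr.
Qed.
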